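(* For every decision $\delta=(\delta_0,\delta_1)$ with $0<\delta_1<\delta_0<1$ there exists a decision $\delta'=(\delta'_0,\delta'_1)$ with $0<\delta'_0<\delta'_1<1$ such that $R_{\delta'}(\theta)<R_\delta(\theta)$ for every $\theta\in[0,1]$.
   Context: Bernoulli model: for $\theta\in[0,1]$, $p_\theta(x)=\theta^x(1-\theta)^{1-x}$, $x\in\{0,1\}$. A nonrandomized decision is a pair $\delta=(\delta_0,\delta_1)\in[0,1]^2$, used as the predictive distribution $p_\delta(y\mid x)=\delta_x^{\,y}(1-\delta_x)^{1-y}$ for a future $y\in\{0,1\}$ after observing $x$. The Kullback–Leibler risk is $R_\delta(\theta)=-S(\theta)+\theta^2\log\frac1{\delta_1}+\theta(1-\theta)\log\frac1{1-\delta_1}+\theta(1-\theta)\log\frac1{\delta_0}+(1-\theta)^2\log\frac1{1-\delta_0}$, where $S(\theta)=-\theta\log\theta-(1-\theta)\log(1-\theta)$ (with $0\log 0=0$) is the binary entropy. *)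

From Stdlib Require Import Reals Lra.
Open Scope R_scope.

Definition xlnx (x : R) : R := if Req_EM_T x 0 then 0 else x * ln x.

Definition bin_entropy (t : R) : R := - xlnx t - xlnx (1 - t).

Definition KLrisk (d0 d1 t : R) : R :=
  - bin_entropy t
  + t ^ 2 * ln (/ d1)
  + t * (1 - t) * ln (/ (1 - d1))
  + t * (1 - t) * ln (/ d0)
  + (1 - t) ^ 2 * ln (/ (1 - d0)).

(* The risk difference R_delta - R_delta' is a quadratic form in (theta, 1 - theta)
   whose coefficients are differences of logarithms; the entropy terms cancel.
   With c = 1 + delta0 - delta1 and r = sqrt c, take delta'0 = delta0 / c and choose
   delta'1 so that (1 - delta1) / (1 - delta'1) = 1 + w with w = 2 r (r - 1).  The
   bound ln x <= x - 1 then gives lower bounds on the square coefficients and an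
   upper bound 2 (delta0 - delta1) on the cross coefficient; since
   delta0 - delta1 = r^2 - 1 < w, the resulting form has negative discriminant. *)
From Stdlib Require Import Reals Lra Psatz.
Open Scope R_scope.

Lemma ln_le_sub1 x : 0 < x -> ln x <= x - 1.
Proof.
  intros Hx; pose proof (exp_ineq1_le (ln x)) as E.
  rewrite exp_ln in E; lra.
Qed.

Lemma ln_sub_ln_le x y : 0 < x -> 0 < y -> ln x - ln y <= x / y - 1.
Proof.
  intros Hx Hy.
  assert (Hiy : 0 < / y) by (apply Rinv_0_lt_compat; lra).
  pose proof (ln_le_sub1 (x / y) ltac:(apply Rdiv_lt_0_compat; lra)) as H.
  unfold Rdiv in *; rewrite ln_mult, ln_Rinv in H by lra; lra.
Qed.

Lemma KLrisk_sub d0 d1 e0 e1 t :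
  0 < d0 < 1 -> 0 < d1 < 1 -> 0 < e0 < 1 -> 0 < e1 < 1 ->
  KLrisk d0 d1 t - KLrisk e0 e1 t =
  t ^ 2 * (ln e1 - ln d1) - t * (1 - t) * (ln (1 - d1) - ln (1 - e1))
  - t * (1 - t) * (ln d0 - ln e0) + (1 - t) ^ 2 * (ln (1 - e0) - ln (1 - d0)).
Proof. intros; unfold KLrisk; rewrite !ln_Rinv by lra; ring. Qed.

Lemma quadratic_form_pos a b W t :
  0 < a -> W * W < 4 * a * b -> 0 < t ^ 2 * a - t * (1 - t) * W + (1 - t) ^ 2 * b.
Proof.
  intros Ha HW.
  assert (Hsq : 4 * a * (t ^ 2 * a - t * (1 - t) * W + (1 - t) ^ 2 * b) =
                (2 * a * t - W * (1 - t)) ^ 2 + (4 * a * b - W * W) * (1 - t) ^ 2) by ring.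
  destruct (Req_dec t 1) as [->|Ht]; [ring_simplify; lra|].
  assert (0 < (1 - t) ^ 2) by (rewrite <- Rsqr_pow2; apply Rsqr_pos_lt; lra).
  assert (0 <= (2 * a * t - W * (1 - t)) ^ 2) by (apply pow2_ge_0).
  nra.
Qed.

Lemma quadratic_form_le a b W X1 X2 X3 X4 t :
  0 <= t <= 1 -> a <= X1 -> b <= X2 -> X3 + X4 <= W ->
  t ^ 2 * a - t * (1 - t) * W + (1 - t) ^ 2 * b <=
  t ^ 2 * X1 - t * (1 - t) * X4 - t * (1 - t) * X3 + (1 - t) ^ 2 * X2.
Proof.
  intros Ht H1 H2 H34.
  assert (0 <= t * (1 - t)) by nra.
  assert (t ^ 2 * a <= t ^ 2 * X1) by (apply Rmult_le_compat_l; nra).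
  assert ((1 - t) ^ 2 * b <= (1 - t) ^ 2 * X2) by (apply Rmult_le_compat_l; nra).
  assert (t * (1 - t) * (X3 + X4) <= t * (1 - t) * W) by (apply Rmult_le_compat_l; lra).
  lra.
Qed.

Section Improvement.

Variables d0 d1 : R.
Hypotheses (Hd1 : 0 < d1) (Hd10 : d1 < d0) (Hd0 : d0 < 1).

Let c := 1 + d0 - d1.
Let r := sqrt c.
Let w := 2 * r * (r - 1).
Definition improved0 := d0 / c.
Definition improved1 := (d1 + w) / (1 + w).

Lemma sqrt_gap_sq : r * r = c.
Proof. apply sqrt_sqrt; unfold c; lra. Qed.

Lemma sqrt_gap_gt1 : 1 < r.
Proof.
  pose proof sqrt_gap_sq.
  assert (0 <= r) by apply sqrt_pos.
  assert (1 < c) by (unfold c; lra).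
  nra.
Qed.

Lemma gap_lt_w : d0 - d1 < w.
Proof.
  pose proof sqrt_gap_sq; pose proof sqrt_gap_gt1.
  unfold c, w in *; nra.
Qed.

Lemma w_pos : 0 < w.
Proof. pose proof gap_lt_w; lra. Qed.

Lemma improved0_compl : 1 - improved0 = (1 - d1) / c.
Proof. unfold improved0, c; field; lra. Qed.

Lemma improved1_compl : 1 - improved1 = (1 - d1) / (1 + w).
Proof. pose proof w_pos; unfold improved1; field; lra. Qed.

Lemma improved_bounds : 0 < improved0 < improved1 /\ improved1 < 1.
Proof.
  pose proof w_pos; pose proof gap_lt_w; pose proof improved1_compl.
  assert (Hd : improved1 - improved0 = (1 - d1) * (w - (d0 - d1)) / (c * (1 + w))).
  { unfold improved0, improved1, c; field; lra. }
  assert (0 < improved0) by (apply Rdiv_lt_0_compat; unfold c; lra).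
  assert (0 < (1 - d1) * (w - (d0 - d1)) / (c * (1 + w))).
  { apply Rdiv_lt_0_compat; apply Rmult_lt_0_compat; unfold c; lra. }
  assert (0 < 1 - improved1) by (rewrite improved1_compl; apply Rdiv_lt_0_compat; lra).
  lra.
Qed.

Lemma improved1_log_lb : w * (1 - d1) / (d1 + w) <= ln improved1 - ln d1.
Proof.
  pose proof w_pos; pose proof improved_bounds.
  pose proof (ln_sub_ln_le d1 improved1 Hd1 ltac:(lra)).
  replace (w * (1 - d1) / (d1 + w)) with (1 - d1 / improved1)
    by (unfold improved1; field; lra).
  lra.
Qed.

Lemma improved0_compl_log_lb :
  d0 * (d0 - d1) / (1 - d1) <= ln (1 - improved0) - ln (1 - d0).
Proof.
  pose proof improved_bounds.
  pose proof (ln_sub_ln_le (1 - d0) (1 - improved0) ltac:(lra) ltac:(lra)).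
  replace (d0 * (d0 - d1) / (1 - d1)) with (1 - (1 - d0) / (1 - improved0))
    by (rewrite improved0_compl; unfold c; field; lra).
  lra.
Qed.

(* Writing c = r^2 gives ln c <= 2 (r - 1), strictly below the naive bound c - 1;
   this slack is what permits w > d0 - d1, i.e. improved0 < improved1. *)
Lemma improved0_log_ub : ln d0 - ln improved0 <= 2 * (r - 1).
Proof.
  pose proof sqrt_gap_gt1.
  assert (Hc : 0 < c) by (unfold c; lra).
  replace (ln d0 - ln improved0) with (ln (r * r)).
  - rewrite ln_mult by lra; pose proof (ln_le_sub1 r ltac:(lra)); lra.
  - rewrite sqrt_gap_sq; unfold improved0, Rdiv.
    rewrite ln_mult, ln_Rinv by (try apply Rinv_0_lt_compat; lra); ring.
Qed.

Lemma improved1_compl_log_ub : ln (1 - d1) - ln (1 - improved1) <= w.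
Proof.
  pose proof w_pos; pose proof improved_bounds.
  pose proof (ln_sub_ln_le (1 - d1) (1 - improved1) ltac:(lra) ltac:(lra)).
  assert ((1 - d1) / (1 - improved1) - 1 = w)
    by (rewrite improved1_compl; field; lra).
  lra.
Qed.

Lemma improved_discriminant_neg :
  (2 * (r - 1) + w) * (2 * (r - 1) + w) <
  4 * (w * (1 - d1) / (d1 + w)) * (d0 * (d0 - d1) / (1 - d1)).
Proof.
  pose proof w_pos; pose proof gap_lt_w; pose proof sqrt_gap_sq.
  replace (2 * (r - 1) + w) with (2 * (d0 - d1)) by (unfold w, c in *; nra).
  replace (4 * (w * (1 - d1) / (d1 + w)) * (d0 * (d0 - d1) / (1 - d1)))
    with (4 * w * d0 * (d0 - d1) / (d1 + w)) by (field; lra).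
  apply Rmult_lt_reg_r with (d1 + w); [lra|].
  replace (4 * w * d0 * (d0 - d1) / (d1 + w) * (d1 + w))
    with (4 * w * d0 * (d0 - d1)) by (field; lra).
  assert (0 < d1 * (d0 - d1) * (w - (d0 - d1))) by
    (apply Rmult_lt_0_compat; [apply Rmult_lt_0_compat|]; lra).
  nra.
Qed.

Lemma improved_risk_lt t :
  0 <= t <= 1 -> KLrisk improved0 improved1 t < KLrisk d0 d1 t.
Proof.
  intros Ht.
  pose proof improved_bounds; pose proof w_pos; pose proof sqrt_gap_gt1.
  assert (Ha : 0 < w * (1 - d1) / (d1 + w))
    by (apply Rdiv_lt_0_compat; [apply Rmult_lt_0_compat|]; lra).
  pose proof (quadratic_form_pos _ _ _ t Ha improved_discriminant_neg).
  pose proof (quadratic_form_le _ _ _ _ _ _ _ t Ht improved1_log_lb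
    improved0_compl_log_lb
    (Rplus_le_compat _ _ _ _ improved0_log_ub improved1_compl_log_ub)).
  rewrite <- (KLrisk_sub d0 d1 improved0 improved1 t) in * by lra.
  lra.
Qed.

End Improvement.

Theorem mainTheorem3 :
  forall d0 d1 : R, 0 < d1 -> d1 < d0 -> d0 < 1 ->
  exists e0 e1 : R, 0 < e0 /\ e0 < e1 /\ e1 < 1 /\
    forall t : R, 0 <= t <= 1 -> KLrisk e0 e1 t < KLrisk d0 d1 t.
Proof.
  intros d0 d1 Hd1 Hd10 Hd0.
  exists (improved0 d0 d1), (improved1 d0 d1).
  destruct (improved_bounds d0 d1 Hd1 Hd10 Hd0) as [[He0 He01] He1].
  repeat split; try assumption.
  exact (improved_risk_lt d0 d1 Hd1 Hd10 Hd0).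
Qed.
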